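(* Let $\mathsf{X}$ be any intermediate temporal logic. A temporal theory $\Gamma$ is $\mathsf{X}$-consistent if and only if $\Gamma$ is $\mathrm{LTL}$-consistent.
   Context: Fix a countable set $\mathbb{P}$ of atoms. Temporal formulas: $\varphi ::= p\mid\bot\mid\varphi\wedge\varphi\mid\varphi\vee\varphi\mid\varphi\to\varphi\mid\circ\varphi\mid\varphi\,\mathsf{U}\,\varphi\mid\varphi\,\mathsf{R}\,\varphi$; $\Box\varphi:=\bot\,\mathsf{R}\,\varphi$. An intuitionistic temporal frame is $(W,\preccurlyeq,S)$ with $W\ne\emptyset$, $\preccurlyeq$ a partial order, $S:W\to W$ forward confluent ($w\preccurlyeq v\Rightarrow S(w)\preccurlyeq S(v)$); persistent if also backward confluent (if $S(w)=v\preccurlyeq u$ then some $t\succcurlyeq w$ has $S(t)=u$). A model adds $V:W\to2^{\mathbb{P}}$ monotone along $\preccurlyeq$. Satisfaction: atoms via $V$; $\bot$ never; $\wedge,\vee$ pointwise; $M,w\models\varphi\to\psi$ iff for all $v\succcurlyeq w$, $M,v\models\varphi$ implies $M,v\models\psi$; $\circ\varphi$ at $w$ iff $\varphi$ at $S(w)$; $\varphi\,\mathsf{U}\,\psi$: some $k\ge0$ with $\psi$ at $S^k(w)$ and $\varphi$ at $S^i(w)$ for all $0\le i<k$; $\varphi\,\mathsf{R}\,\psi$: for all $k\ge0$, $\psi$ at $S^k(w)$ or $\varphi$ at some $S^i(w)$, $0\le i<k$. Depth $\le n$: no chain of $n+1$ pairwise distinct $\preccurlyeq$-related worlds. $\mathrm{ITL}^{\mathrm{BD}_n}$: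 formulas true at every world of every model on a persistent frame of depth $\le n$; $\mathrm{LTL}:=\mathrm{ITL}^{\mathrm{BD}_1}$, whose models are those with $\preccurlyeq$ the identity. An intermediate temporal logic is a set $\mathsf{X}$ with $\mathrm{ITL}^{\mathrm{BD}_n}\subseteq\mathsf{X}\subseteq\mathrm{LTL}$ for some $n\ge1$, closed under modus ponens, necessitation ($\psi\in\mathsf{X}\Rightarrow\circ\psi,\Box\psi\in\mathsf{X}$) and uniform substitution. $\mathsf{X}$-models are models on persistent frames of depth $\le n$ validating every formula of $\mathsf{X}$. $\Gamma$ is $\mathsf{X}$-consistent if some $\mathsf{X}$-model satisfies all of $\Gamma$ at some world. *)

From Stdlib Require Import Arith.

Definition atom := nat.

Inductive form : Type :=
| Atom : atom -> form
| Bot : form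
| And : form -> form -> form
| Or : form -> form -> form
| Imp : form -> form -> form
| Next : form -> form
| Until : form -> form -> form
| Release : form -> form -> form.

Definition Box (phi : form) : form := Release Bot phi.

Fixpoint subst (s : atom -> form) (phi : form) : form :=
  match phi with
  | Atom p => s p
  | Bot => Bot
  | And a b => And (subst s a) (subst s b)
  | Or a b => Or (subst s a) (subst s b)
  | Imp a b => Imp (subst s a) (subst s b)
  | Next a => Next (subst s a)
  | Until a b => Until (subst s a) (subst s b)
  | Release a b => Release (subst s a) (subst s b)
  end.

Record model : Type := Model {
  world : Type;
  wle : world -> world -> Prop;
  succ : world -> world;
  val : world -> atom -> Prop
}.

Definition frame_ok (M : model) : Prop :=
  (exists w : world M, True) /\
  (forall w, wle M w w) /\
  (forall u v w, wle M u v -> wle M v w -> wle M u w) /\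
  (forall u v, wle M u v -> wle M v u -> u = v) /\
  (forall w v, wle M w v -> wle M (succ M w) (succ M v)) /\
  (forall w v p, wle M w v -> val M w p -> val M v p).

Definition persistent (M : model) : Prop :=
  forall w u, wle M (succ M w) u -> exists t, wle M w t /\ succ M t = u.

Definition depth_le (M : model) (n : nat) : Prop :=
  ~ exists c : nat -> world M,
      forall i j, i <= n -> j <= n -> i <> j ->
        c i <> c j /\ (wle M (c i) (c j) \/ wle M (c j) (c i)).

Definition iter_succ (M : model) (k : nat) (w : world M) : world M :=
  Nat.iter k (succ M) w.

Fixpoint sat (M : model) (w : world M) (phi : form) : Prop :=
  match phi with
  | Atom p => val M w p
  | Bot => False
  | And a b => sat M w a /\ sat M w b
  | Or a b => sat M w a \/ sat M w b
  | Imp a b => forall v, wle M w v -> sat M v a -> sat M v b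
  | Next a => sat M (succ M w) a
  | Until a b => exists k, sat M (iter_succ M k w) b /\
                   forall i, i < k -> sat M (iter_succ M i w) a
  | Release a b => forall k, sat M (iter_succ M k w) b \/
                   exists i, i < k /\ sat M (iter_succ M i w) a
  end.

Definition BD_model (n : nat) (M : model) : Prop :=
  frame_ok M /\ persistent M /\ depth_le M n.

Definition ITL_BD (n : nat) (phi : form) : Prop :=
  forall M, BD_model n M -> forall w : world M, sat M w phi.

Definition LTL : form -> Prop := ITL_BD 1.

(* X is an intermediate temporal logic, witnessed by the depth bound n *)
Definition intermediate (n : nat) (X : form -> Prop) : Prop :=
  1 <= n /\
  (forall phi, ITL_BD n phi -> X phi) /\
  (forall phi, X phi -> LTL phi) /\
  (forall phi psi, X phi -> X (Imp phi psi) -> X psi) /\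
  (forall psi, X psi -> X (Next psi) /\ X (Box psi)) /\
  (forall s phi, X phi -> X (subst s phi)).

Definition X_model (n : nat) (X : form -> Prop) (M : model) : Prop :=
  BD_model n M /\ forall phi, X phi -> forall w : world M, sat M w phi.

Definition X_consistent (n : nat) (X : form -> Prop) (Gamma : form -> Prop) : Prop :=
  exists M, X_model n X M /\
    exists w : world M, forall phi, Gamma phi -> sat M w phi.

Definition LTL_consistent (Gamma : form -> Prop) : Prop :=
  X_consistent 1 LTL Gamma.

From Stdlib Require Import Arith Lia Classical Setoid.

(* Satisfaction is upward persistent, and by backward confluence the
   successor of a maximal world is maximal.  Hence a world of a model of
   bounded depth satisfying Gamma lies below a maximal world that still
   satisfies Gamma, and the whole S-orbit of that world consists of maximal
   worlds, on which the intuitionistic implication collapses to the classical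
   one: the model with the order replaced by equality is an LTL-model
   satisfying Gamma there.  Conversely an LTL-model has depth 1, and
   X is contained in LTL. *)

Definition maximal (M : model) (u : world M) : Prop :=
  forall v, wle M u v -> v = u.

Definition wlt (M : model) (u v : world M) : Prop := wle M u v /\ u <> v.

Definition discrete_model (M : model) : model :=
  Model (world M) eq (succ M) (val M).

Lemma depth_le_mono (M : model) (m n : nat) :
  m <= n -> depth_le M m -> depth_le M n.
Proof.
  intros Hmn Hd [c Hc]. apply Hd. exists c. intros i j Hi Hj Hij. apply Hc; lia.
Qed.

Lemma BD_model_mono (M : model) (m n : nat) :
  m <= n -> BD_model m M -> BD_model n M.
Proof.
  intros Hmn [HF [Hp Hd]]. exact (conj HF (conj Hp (depth_le_mono M m n Hmn Hd))).
Qed.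

Section Frame.

Variable M : model.
Hypothesis HF : frame_ok M.

Lemma wle_refl (u : world M) : wle M u u.
Proof. apply HF. Qed.

Lemma wle_trans (u v w : world M) : wle M u v -> wle M v w -> wle M u w.
Proof. apply HF. Qed.

Lemma wle_antisym (u v : world M) : wle M u v -> wle M v u -> u = v.
Proof. apply HF. Qed.

Lemma iter_succ_wle (k : nat) (u v : world M) :
  wle M u v -> wle M (iter_succ M k u) (iter_succ M k v).
Proof.
  induction k as [|k IH]; simpl; auto. intros Huv. apply HF, IH, Huv.
Qed.

Lemma sat_wle (phi : form) (u v : world M) :
  wle M u v -> sat M u phi -> sat M v phi.
Proof.
  revert u v. induction phi; intros u v Huv Hu; simpl in *.
  - apply HF with u; assumption.
  - exact Hu.
  - destruct Hu; split; eauto.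
  - destruct Hu; [left | right]; eauto.
  - intros x Hvx. apply Hu. exact (wle_trans _ _ _ Huv Hvx).
  - apply IHphi with (succ M u); [apply HF |]; assumption.
  - destruct Hu as [k [Hk Hi]]. exists k. split.
    + exact (IHphi2 _ _ (iter_succ_wle k u v Huv) Hk).
    + intros i Hik. exact (IHphi1 _ _ (iter_succ_wle i u v Huv) (Hi i Hik)).
  - intros k. destruct (Hu k) as [Hk | [i [Hik Hi]]].
    + left. exact (IHphi2 _ _ (iter_succ_wle k u v Huv) Hk).
    + right. exists i. split; [exact Hik |].
      exact (IHphi1 _ _ (iter_succ_wle i u v Huv) Hi).
Qed.

Lemma wlt_trans (u v w : world M) : wlt M u v -> wlt M v w -> wlt M u w.
Proof.
  intros [Huv Nuv] [Hvw Nvw]. split; [exact (wle_trans _ _ _ Huv Hvw) |].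
  intros <-. apply Nuv, wle_antisym; assumption.
Qed.

Lemma strict_chain_lt (k : nat) (c : nat -> world M) :
  (forall i, i < k -> wlt M (c i) (c (S i))) ->
  forall i j, i < j <= k -> wlt M (c i) (c j).
Proof.
  intros Hc i j Hij. induction j as [|j IH]; [lia |].
  destruct (Nat.eq_dec i j) as [<- | Nij]; [apply Hc; lia |].
  apply wlt_trans with (c j); [apply IH | apply Hc]; lia.
Qed.

Lemma maximal_above_or_strict_chain (k : nat) (w : world M) :
  (exists v, wle M w v /\ maximal M v) \/
  (exists c, c 0 = w /\ forall i, i < k -> wlt M (c i) (c (S i))).
Proof.
  revert w. induction k as [|k IH]; intros w.
  - right. exists (fun _ => w). split; [reflexivity | lia].
  - destruct (classic (maximal M w)) as [Hw | Hw].
    { left. exists w. split; [apply wle_refl | exact Hw]. }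
    apply not_all_ex_not in Hw as [x Hx]. apply imply_to_and in Hx as [Hwx Nxw].
    destruct (IH x) as [[v [Hxv Hv]] | [c [Hc0 Hc]]].
    + left. exists v. split; [exact (wle_trans _ _ _ Hwx Hxv) | exact Hv].
    + right. exists (fun i => match i with 0 => w | S i => c i end).
      split; [reflexivity |].
      intros [|i] Hi.
      * rewrite Hc0. split; [exact Hwx | intros E; apply Nxw; symmetry; exact E].
      * apply Hc. lia.
Qed.

Lemma exists_maximal_above (n : nat) (w : world M) :
  depth_le M n -> exists v, wle M w v /\ maximal M v.
Proof.
  intros Hd. destruct (maximal_above_or_strict_chain n w) as [H | [c [_ Hc]]];
    [exact H | exfalso].
  apply Hd. exists c. intros i j Hi Hj Nij.
  assert (i < j \/ j < i) as [Hij | Hji] by lia.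
  - destruct (strict_chain_lt n c Hc i j) as [Hle Hne]; [lia |]. auto.
  - destruct (strict_chain_lt n c Hc j i) as [Hle Hne]; [lia |]. auto.
Qed.

Lemma discrete_model_BD1 : BD_model 1 (discrete_model M).
Proof.
  destruct HF as [[w _] _]. split; [| split].
  - repeat split; simpl; intros; subst; eauto.
  - intros u v H. exists u. split; [reflexivity | exact H].
  - intros [c Hc]. destruct (Hc 0 1) as [Hne Heq]; try lia.
    destruct Heq; auto.
Qed.

Lemma discrete_model_LTL_model : X_model 1 LTL (discrete_model M).
Proof.
  split; [exact discrete_model_BD1 |].
  intros phi Hphi. exact (Hphi _ discrete_model_BD1).
Qed.

Hypothesis Hp : persistent M.

Lemma maximal_succ (u : world M) : maximal M u -> maximal M (succ M u).
Proof.
  intros Hu v Hv. destruct (Hp u v Hv) as [t [Hut <-]]. rewrite (Hu t Hut). reflexivity.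
Qed.

Lemma maximal_iter_succ (k : nat) (u : world M) :
  maximal M u -> maximal M (iter_succ M k u).
Proof.
  induction k as [|k IH]; simpl; auto. intros Hu. apply maximal_succ, IH, Hu.
Qed.

Lemma sat_discrete_model (phi : form) (u : world M) :
  maximal M u -> (sat (discrete_model M) u phi <-> sat M u phi).
Proof.
  revert u. induction phi; intros u Hu; simpl;
    change (iter_succ (discrete_model M)) with (iter_succ M).
  - reflexivity.
  - reflexivity.
  - rewrite IHphi1, IHphi2 by exact Hu. reflexivity.
  - rewrite IHphi1, IHphi2 by exact Hu. reflexivity.
  - split.
    + intros H v Hv. rewrite (Hu v Hv). intros Ha.
      apply IHphi2, H, IHphi1; auto.
    + intros H v <- Ha. apply IHphi2, H, IHphi1; auto. apply wle_refl.
  - exact (IHphi _ (maximal_succ u Hu)).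
  - pose proof (fun k => IHphi1 _ (maximal_iter_succ k u Hu)) as IH1.
    pose proof (fun k => IHphi2 _ (maximal_iter_succ k u Hu)) as IH2.
    setoid_rewrite IH1. setoid_rewrite IH2. reflexivity.
  - pose proof (fun k => IHphi1 _ (maximal_iter_succ k u Hu)) as IH1.
    pose proof (fun k => IHphi2 _ (maximal_iter_succ k u Hu)) as IH2.
    setoid_rewrite IH1. setoid_rewrite IH2. reflexivity.
Qed.

End Frame.

Lemma LTL_consistent_of_X_consistent (n : nat) (X Gamma : form -> Prop) :
  X_consistent n X Gamma -> LTL_consistent Gamma.
Proof.
  intros [M [[[HF [Hp Hd]] _] [w Hw]]].
  destruct (exists_maximal_above M HF n w Hd) as [v [Hwv Hv]].
  exists (discrete_model M). split; [exact (discrete_model_LTL_model M HF) |].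
  exists v. intros phi Hphi.
  apply (sat_discrete_model M HF Hp phi v Hv), (sat_wle M HF phi w v Hwv), Hw, Hphi.
Qed.

Lemma X_consistent_of_LTL_consistent (n : nat) (X Gamma : form -> Prop) :
  1 <= n -> (forall phi, X phi -> LTL phi) ->
  LTL_consistent Gamma -> X_consistent n X Gamma.
Proof.
  intros Hn HXL [M [[HM HL] HGamma]]. exists M. split; [| exact HGamma].
  split; [exact (BD_model_mono M 1 n Hn HM) |].
  intros phi Hphi. apply HL, HXL, Hphi.
Qed.

Theorem corollary4p7 (n : nat) (X : form -> Prop) (Gamma : form -> Prop) :
  intermediate n X -> (X_consistent n X Gamma <-> LTL_consistent Gamma).
Proof.
  intros [Hn [_ [HXL _]]]. split.
  - apply LTL_consistent_of_X_consistent.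
  - apply X_consistent_of_LTL_consistent; assumption.
Qed.
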